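(* Let $V,W$ be finite-dimensional Hermitian vector spaces, $\tilde W=V\oplus V\oplus W$, and let $B_1,B_2\in\mathrm{End}(V)$, $i\in\mathrm{Hom}(W,V)$, $j\in\mathrm{Hom}(V,W)$ satisfy $[B_1,B_2]+ij=0$ and $[B_1,B_1^\dagger]+[B_2,B_2^\dagger]+ii^\dagger-j^\dagger j=0$. Let $\alpha_{\rm I}:V\otimes\mathfrak{M}^{\rm I}_q\to\tilde W\otimes\mathfrak{M}^{\rm I}_q$ and $\beta_{\rm I}:\tilde W\otimes\mathfrak{M}^{\rm I}_q\to V\otimes\mathfrak{M}^{\rm I}_q$ be the right-linear maps $$\alpha_{\rm I}=\begin{pmatrix}B_1\otimes 1-1\otimes x_{21'}\\ B_2\otimes1-1\otimes x_{22'}\\ j\otimes 1\end{pmatrix},\qquad \beta_{\rm I}=\begin{pmatrix}-B_2\otimes1+1\otimes x_{22'} & B_1\otimes1-1\otimes x_{21'} & i\otimes1\end{pmatrix}.$$ Then (1) $\alpha_{\rm I}$ is injective; (2) $\beta_{\rm I}$ is surjective if and only if $(B_1,B_2,i,j)$ is stable.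
   Context: $\mathfrak{M}^{\rm I}_q$ is the algebra generated by $x_{11'},x_{12'},x_{21'},x_{22'}$ subject to $x_{11'}x_{12'}=x_{12'}x_{11'}$, $x_{21'}x_{22'}=x_{22'}x_{21'}$, $[x_{11'},x_{22'}]+[x_{21'},x_{12'}]=0$, $x_{11'}x_{21'}=q^{-2}x_{21'}x_{11'}$, $x_{12'}x_{22'}=q^{-2}x_{22'}x_{12'}$, $x_{21'}x_{12'}=q^2x_{12'}x_{21'}$, with $q>0$ real. For a linear map $A$ and $x\in\mathfrak{M}^{\rm I}_q$, $A\otimes x$ is the right-linear map $v\otimes f\mapsto Av\otimes xf$. $(B_1,B_2,i,j)$ is stable if no proper subspace $S\subsetneq V$ satisfies $B_k(S)\subset S$ ($k=1,2$) and $i(W)\subset S$. *)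

From HB Require Import structures.
From mathcomp Require Import all_boot all_order all_algebra.
Set Implicit Arguments. Unset Strict Implicit. Unset Printing Implicit Defensive.
Import Order.TTheory GRing.Theory Num.Theory.
Local Open Scope ring_scope.

(* An element is a finite formal linear combination of words, i.e. a list of
   (coefficient, word); two lists denote the same element iff [coef] agrees. *)
Definition word := seq 'I_4.
Definition fpoly (C : numClosedFieldType) := seq (C * word).

Section FreeAlg.
Variable C : numClosedFieldType.

Definition coef (p : fpoly C) (w : word) : C :=
  \sum_(t <- p | t.2 == w) t.1.

Definition padd (p r : fpoly C) : fpoly C := p ++ r.
Definition pscale (c : C) (p : fpoly C) : fpoly C := [seq (c * t.1, t.2) | t <- p].
Definition popp (p : fpoly C) : fpoly C := pscale (-1) p.
Definition psub (p r : fpoly C) : fpoly C := padd p (popp r).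
Definition pmul (p r : fpoly C) : fpoly C :=
  [seq (a.1 * b.1, a.2 ++ b.2) | a <- p, b <- r].
Definition pword (w : word) : fpoly C := [:: (1, w)].
Definition pX (k : 'I_4) : fpoly C := pword [:: k].

Definition x11 : 'I_4 := @Ordinal 4 0 isT.
Definition x12 : 'I_4 := @Ordinal 4 1 isT.
Definition x21 : 'I_4 := @Ordinal 4 2 isT.
Definition x22 : 'I_4 := @Ordinal 4 3 isT.

Definition comm2 (a b : 'I_4) : fpoly C := psub (pword [:: a; b]) (pword [:: b; a]).

(* The six defining relations of M^I_q (each as "lhs - rhs"). *)
Definition relI (q : C) (k : 'I_6) : fpoly C :=
  match val k with
  | 0 => comm2 x11 x12
  | 1 => comm2 x21 x22
  | 2 => padd (comm2 x11 x22) (comm2 x21 x12)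
  | 3 => psub (pword [:: x11; x21]) (pscale (q ^- 2) (pword [:: x21; x11]))
  | 4 => psub (pword [:: x12; x22]) (pscale (q ^- 2) (pword [:: x22; x12]))
  | _ => psub (pword [:: x21; x12]) (pscale (q ^+ 2) (pword [:: x12; x21]))
  end.

Definition ideal_elt (q : C) (s : seq (C * word * 'I_6 * word)) : fpoly C :=
  flatten [seq pscale t.1.1.1 (pmul (pmul (pword t.1.1.2) (relI q t.1.2)) (pword t.2))
          | t <- s].

(* p lies in the two-sided ideal generated by the relations, i.e. p = 0 in M^I_q. *)
Definition inIdeal (q : C) (p : fpoly C) : Prop :=
  exists s, forall w, coef p w = coef (ideal_elt q s) w.

Definition Meq (q : C) (p r : fpoly C) : Prop := inIdeal q (psub p r).

(* (A (x) 1) applied to a vector: v (x) f |-> A v (x) f, A acting on columns. *)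
Definition mact m n (A : 'M[C]_(m, n)) (f : 'I_n -> fpoly C) : 'I_m -> fpoly C :=
  fun a => flatten [seq pscale (A a k) (f k) | k <- enum 'I_n].

(* (1 (x) x) applied to a vector: v (x) f |-> v (x) x f. *)
Definition xact n (k : 'I_4) (f : 'I_n -> fpoly C) : 'I_n -> fpoly C :=
  fun a => pmul (pX k) (f a).

Definition vsub n (f g : 'I_n -> fpoly C) : 'I_n -> fpoly C := fun a => psub (f a) (g a).
Definition vadd n (f g : 'I_n -> fpoly C) : 'I_n -> fpoly C := fun a => padd (f a) (g a).

(* alpha_I : V (x) M -> (V + V + W) (x) M, the target written as a triple. *)
Definition alphaI n d (B1 B2 : 'M[C]_n) (j : 'M[C]_(d, n)) (f : 'I_n -> fpoly C) :
  (('I_n -> fpoly C) * ('I_n -> fpoly C) * ('I_d -> fpoly C)) :=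
  (vsub (mact B1 f) (xact x21 f), vsub (mact B2 f) (xact x22 f), mact j f).

Definition betaI n d (B1 B2 : 'M[C]_n) (i : 'M[C]_(n, d))
  (g : ('I_n -> fpoly C) * ('I_n -> fpoly C) * ('I_d -> fpoly C)) : 'I_n -> fpoly C :=
  vadd (vadd (vsub (xact x22 g.1.1) (mact B2 g.1.1))
             (vsub (mact B1 g.1.2) (xact x21 g.1.2)))
       (mact i g.2).

(* Hermitian adjoint w.r.t. the standard inner products on C^n, C^d. *)
Definition dag m n (A : 'M[C]_(m, n)) : 'M[C]_(n, m) := (map_mx Num.conj A)^T.

(* Subspaces are row spaces (mxalgebra); a column vector
   v is represented by the row v^T, so B v corresponds to v^T B^T. *)
Definition stable n d (B1 B2 : 'M[C]_n) (i : 'M[C]_(n, d)) : Prop :=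
  ~ exists S : 'M[C]_n,
      [/\ (S *m B1^T <= S)%MS, (S *m B2^T <= S)%MS, (i^T <= S)%MS & (\rank S < n)%N].

End FreeAlg.

(* The ordered monomials x12^a x21^b x22^c x11^e span M^I_q: every word straightens
   into them by the six relations.  They are also independent: the left regular
   representation, written on their coefficients and applied to the unit, returns
   the coefficient vector of an element.  In these coordinates x21 raises the
   x21-degree by exactly one (up to the unit q^(2a)), so (B1 - x21) f = 0 forces
   f = 0 by looking at the top x21-degree: alpha_I is injective already through its
   first component.
   If the data is not stable, the annihilator of a proper B1, B2-invariant subspace
   containing im i is nonzero and B1, B2 commute on it, because ij vanishes there.
   A common eigenvector phi (eigenvalues b1, b2, phi i = 0), paired with the
   character x21 |-> b1, x22 |-> b2, x11, x12 |-> 0 of M^I_q, kills the image of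
   beta_I but not e_a (x) 1.  Conversely, the v such that v (x) m lies in the image
   of beta_I for every m form a space containing the columns of i and stable under
   B1, B2 (beta_I (0, v (x) m, 0) = B1 v (x) m - v (x) x21 m), hence everything when
   the data is stable. *)

From HB Require Import structures.
From mathcomp Require Import all_boot all_order all_algebra.
From mathcomp Require Import ring spectral.
From mathcomp Require Import boolp functions.
Set Implicit Arguments. Unset Strict Implicit. Unset Printing Implicit Defensive.
Import Order.TTheory GRing.Theory Num.Theory.
Local Open Scope ring_scope.

Section Coefficients.
Variable C : numClosedFieldType.
Implicit Types (p r : fpoly C) (u v w : word).

Lemma coef_nil w : coef ([::] : fpoly C) w = 0.
Proof. by rewrite /coef big_nil. Qed.

Lemma coef_fpoly_cons t p w : coef (t :: p) w = (t.2 == w)%:R * t.1 + coef p w.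
Proof. by rewrite /coef big_cons; case: eqP; rewrite ?mul1r ?mul0r ?add0r. Qed.

Lemma coef_cat p r w : coef (p ++ r) w = coef p w + coef r w.
Proof. by rewrite /coef big_cat. Qed.

Lemma coef_pscale c p w : coef (pscale c p) w = c * coef p w.
Proof.
rewrite /coef /pscale big_map mulr_sumr big_mkcond [RHS]big_mkcond /=.
by apply: eq_bigr => t _; case: ifP; rewrite ?mulr0.
Qed.

Lemma coef_pword u w : coef (pword C u) w = (u == w)%:R.
Proof. by rewrite coef_fpoly_cons coef_nil mulr1 addr0. Qed.

Lemma coef_psub p r w : coef (psub p r) w = coef p w - coef r w.
Proof. by rewrite coef_cat coef_pscale mulN1r. Qed.

Lemma coef_flatten (l : seq (fpoly C)) w :
  coef (flatten l) w = \sum_(p <- l) coef p w.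
Proof.
elim: l => [|p l IH]; first by rewrite big_nil coef_nil.
by rewrite coef_cat IH big_cons.
Qed.

Lemma coef_mact m n (A : 'M[C]_(m, n)) (f : 'I_n -> fpoly C) a w :
  coef (mact A f a) w = \sum_k A a k * coef (f k) w.
Proof.
rewrite coef_flatten big_map big_enum /=.
by apply: eq_bigr => k _; rewrite coef_pscale.
Qed.

Lemma coef_vadd n (f g : 'I_n -> fpoly C) a w :
  coef (vadd f g a) w = coef (f a) w + coef (g a) w.
Proof. exact: coef_cat. Qed.

Lemma coef_vsub n (f g : 'I_n -> fpoly C) a w :
  coef (vsub f g a) w = coef (f a) w - coef (g a) w.
Proof. exact: coef_psub. Qed.

Lemma coef_map_can (T : eqType) (f : T -> word) (g : word -> T) (p : seq (C * T)) w :
  cancel f g ->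
  coef [seq (t.1, f t.2) | t <- p] w = (f (g w) == w)%:R * \sum_(t <- p | t.2 == g w) t.1.
Proof.
move=> fK; rewrite /coef big_map; have [e|ne] := eqP.
  by rewrite mul1r -{1}e; apply: eq_bigl => t; rewrite (can_eq fK).
by rewrite mul0r big1 // => t /eqP ftw; case: ne; rewrite -ftw fK.
Qed.

Definition sandwich u v p : fpoly C := [seq (t.1, u ++ t.2 ++ v) | t <- p].

Lemma sandwichK u v :
  cancel (fun m => u ++ m ++ v) (fun w => take (size w - size u - size v) (drop (size u) w)).
Proof.
by move=> m; rewrite drop_size_cat // !size_cat addKn addnK take_size_cat.
Qed.

Lemma coef_sandwich u v p w :
  coef (sandwich u v p) w =
  (u ++ take (size w - size u - size v) (drop (size u) w) ++ v == w)%:R *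
  coef p (take (size w - size u - size v) (drop (size u) w)).
Proof. exact: coef_map_can (sandwichK u v). Qed.

Lemma pmul_pwordl u p : pmul (pword C u) p = [seq (1 * t.1, u ++ t.2) | t <- p].
Proof. by rewrite /pmul /pword /= cats0. Qed.

Lemma pmul_pwordr p v : pmul p (pword C v) = [seq (t.1 * 1, t.2 ++ v) | t <- p].
Proof. by rewrite /pmul /pword; elim: p => //= t p ->. Qed.

Lemma coef_pmul_pword u p v w :
  coef (pmul (pmul (pword C u) p) (pword C v)) w = coef (sandwich u v p) w.
Proof.
rewrite pmul_pwordl pmul_pwordr -map_comp /coef !big_map.
by apply: eq_big => t /=; rewrite ?catA // mulr1 mul1r.
Qed.

Definition coefXl (k : 'I_4) (c : word -> C) w : C :=
  if w is k' :: w' then (k' == k)%:R * c w' else 0.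

Lemma coef_pmulX k p w : coef (pmul (pX C k) p) w = coefXl k (coef p) w.
Proof.
rewrite /pX pmul_pwordl /coef big_map; case: w => [|k' w] /=.
  by rewrite big1.
have [->|nk] := eqP.
  by rewrite mul1r; apply: eq_big => t; rewrite ?eqseq_cons ?eqxx ?mul1r.
by rewrite mul0r big1 // => t; rewrite eqseq_cons => /andP[/eqP/esym].
Qed.

Lemma coef_xact n k (f : 'I_n -> fpoly C) a w :
  coef (xact k f a) w = coefXl k (coef (f a)) w.
Proof. exact: coef_pmulX. Qed.

Lemma coefXl_pscale k c p w : coefXl k (coef (pscale c p)) w = c * coefXl k (coef p) w.
Proof. by case: w => [|k' w] /=; rewrite ?mulr0 // coef_pscale mulrCA. Qed.

Lemma coefXl_nil k w : coefXl k (coef ([::] : fpoly C)) w = 0.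
Proof. by case: w => [|k' w] //=; rewrite coef_nil mulr0. Qed.

End Coefficients.

Section Quotient.
Variables (C : numClosedFieldType) (q : C).
Implicit Types (p r : fpoly C) (u v w : word).
Local Notation "p ≡ r" := (Meq q p r) (at level 70).

Lemma sandwich_nil p : sandwich [::] [::] p = p.
Proof. by elim: p => [|[c u] p] //= ->; rewrite cats0. Qed.

Lemma sandwich_sandwich u v u' v' p :
  sandwich u v (sandwich u' v' p) = sandwich (u ++ u') (v' ++ v) p.
Proof. by rewrite /sandwich -map_comp; apply: eq_map => t /=; rewrite !catA. Qed.

Lemma coef_ideal_elt s w : coef (ideal_elt q s) w =
  \sum_(t <- s) t.1.1.1 * coef (sandwich t.1.1.2 t.2 (relI q t.1.2)) w.
Proof.
rewrite coef_flatten big_map; apply: eq_bigr => t _.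
by rewrite coef_pscale coef_pmul_pword.
Qed.

Lemma MeqP p r :
  p ≡ r <-> exists s, forall w, coef p w = coef r w + coef (ideal_elt q s) w.
Proof.
split=> -[s hs]; exists s => w.
  by move: (hs w); rewrite coef_psub => <-; rewrite addrC subrK.
by rewrite coef_psub hs addrC addKr.
Qed.

Lemma Meq_coef p r : (forall w, coef p w = coef r w) -> p ≡ r.
Proof. by move=> e; apply/MeqP; exists [::] => w; rewrite e coef_ideal_elt big_nil addr0. Qed.

Lemma Meq_refl p : p ≡ p.
Proof. exact: Meq_coef. Qed.

Lemma Meq_trans p r t : p ≡ r -> r ≡ t -> p ≡ t.
Proof.
move=> /MeqP[s1 h1] /MeqP[s2 h2]; apply/MeqP; exists (s2 ++ s1) => w.
by rewrite h1 h2 !coef_ideal_elt big_cat addrA.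
Qed.

Lemma Meq_cat p1 r1 p2 r2 : p1 ≡ r1 -> p2 ≡ r2 -> p1 ++ p2 ≡ r1 ++ r2.
Proof.
move=> /MeqP[s1 h1] /MeqP[s2 h2]; apply/MeqP; exists (s1 ++ s2) => w.
rewrite !coef_cat h1 h2 !coef_ideal_elt big_cat /=.
by rewrite -!addrA; congr (_ + _); rewrite addrCA.
Qed.

Lemma Meq_scale c p r : p ≡ r -> pscale c p ≡ pscale c r.
Proof.
move=> /MeqP[s h]; apply/MeqP.
exists [seq (c * t.1.1.1, t.1.1.2, t.1.2, t.2) | t <- s] => w.
rewrite !coef_pscale h !coef_ideal_elt big_map mulrDr mulr_sumr.
by congr (_ + _); apply: eq_bigr => t _; rewrite mulrA.
Qed.

Lemma Meq_scaleA c d p r : p ≡ pscale d r -> pscale c p ≡ pscale (c * d) r.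
Proof.
move=> e; apply: Meq_trans (Meq_scale c e) _.
by apply: Meq_coef => w; rewrite !coef_pscale mulrA.
Qed.

Lemma Meq_sandwich u v p r : p ≡ r -> sandwich u v p ≡ sandwich u v r.
Proof.
move=> /MeqP[s h]; apply/MeqP.
exists [seq (t.1.1.1, u ++ t.1.1.2, t.1.2, t.2 ++ v) | t <- s] => w.
rewrite !coef_sandwich h mulrDr; congr (_ + _).
rewrite !coef_ideal_elt big_map mulr_sumr; apply: eq_bigr => t _ /=.
by rewrite -sandwich_sandwich [in RHS]coef_sandwich mulrCA.
Qed.

Lemma Meq_rel c k p r :
  (forall w, coef p w = coef r w + c * coef (relI q k) w) -> p ≡ r.
Proof.
move=> h; apply/MeqP; exists [:: (c, [::], k, [::])] => w.
by rewrite h coef_ideal_elt big_cons big_nil addr0 /= sandwich_nil.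
Qed.

Lemma inIdeal_Meq0 p : inIdeal q p <-> p ≡ [::].
Proof.
by split=> -[s h]; exists s => w; rewrite -h coef_psub coef_nil subr0.
Qed.

End Quotient.

Definition expo := (nat * nat * nat * nat)%type.

Definition pbw_word (m : expo) : word :=
  let: (a, b, c, e) := m in nseq a x12 ++ nseq b x21 ++ nseq c x22 ++ nseq e x11.

Definition pbw_expo (w : word) : expo :=
  (count_mem x12 w, count_mem x21 w, count_mem x22 w, count_mem x11 w).

Lemma pbw_wordK : cancel pbw_word pbw_expo.
Proof.
move=> [[[a b] c] e]; rewrite /pbw_expo /= !count_cat !count_nseq /=.
by rewrite !mul0n !mul1n !addn0 ?add0n.
Qed.

Section Straightening.
Variables (C : numClosedFieldType) (q : C).
Hypothesis q_neq0 : q != 0.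
Local Notation "p ≡ r" := (Meq q p r) (at level 70).
Local Notation pw := (pword C).
Local Notation r := (q ^+ 2).

Lemma swap_x21_x12 : pw [:: x21; x12] ≡ pscale r (pw [:: x12; x21]).
Proof.
apply: (@Meq_rel _ _ 1 (@Ordinal 6 5 isT)) => w.
rewrite /relI /= !coef_fpoly_cons coef_nil /=; ring.
Qed.

Lemma swap_x22_x21 : pw [:: x22; x21] ≡ pscale 1 (pw [:: x21; x22]).
Proof.
apply: (@Meq_rel _ _ (-1) (@Ordinal 6 1 isT)) => w.
rewrite /relI /comm2 /= !coef_fpoly_cons coef_nil /=; ring.
Qed.

Lemma swap_x22_x12 : pw [:: x22; x12] ≡ pscale r (pw [:: x12; x22]).
Proof.
apply: (@Meq_rel _ _ (- r) (@Ordinal 6 4 isT)) => w.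
rewrite /relI /= !coef_fpoly_cons coef_nil /=; field; exact: q_neq0.
Qed.

Lemma swap_x11_x12 : pw [:: x11; x12] ≡ pscale 1 (pw [:: x12; x11]).
Proof.
apply: (@Meq_rel _ _ 1 (@Ordinal 6 0 isT)) => w.
rewrite /relI /comm2 /= !coef_fpoly_cons coef_nil /=; ring.
Qed.

Lemma swap_x11_x21 : pw [:: x11; x21] ≡ pscale (q ^- 2) (pw [:: x21; x11]).
Proof.
apply: (@Meq_rel _ _ 1 (@Ordinal 6 3 isT)) => w.
rewrite /relI /= !coef_fpoly_cons coef_nil /=; ring.
Qed.

Lemma swap_x11_x22 :
  pw [:: x11; x22] ≡ pw [:: x22; x11] ++ pscale (1 - r) (pw [:: x12; x21]).
Proof.
have rel2 : pw [:: x11; x22] ≡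
    pw [:: x22; x11] ++ pscale (-1) (pw [:: x21; x12]) ++ pw [:: x12; x21].
  apply: (@Meq_rel _ _ 1 (@Ordinal 6 2 isT)) => w.
  rewrite /relI /comm2 /= !coef_fpoly_cons coef_nil /=; ring.
apply: Meq_trans rel2 _.
have swap := Meq_scale (-1) swap_x21_x12.
apply: Meq_trans (Meq_cat (Meq_refl _ _) (Meq_cat swap (Meq_refl _ _))) _.
by apply: Meq_coef => w; rewrite !(coef_cat, coef_pscale); ring.
Qed.

Lemma Meq_commute_powr x y s : pw [:: x; y] ≡ pscale s (pw [:: y; x]) ->
  forall k P X,
  pw (P ++ x :: nseq k y ++ X) ≡ pscale (s ^+ k) (pw (P ++ nseq k y ++ x :: X)).
Proof.
move=> hxy; elim=> [|k IH] P X.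
  by apply: Meq_coef => w; rewrite coef_pscale expr0 mul1r.
apply: Meq_trans (Meq_sandwich P (nseq k y ++ X) hxy) _.
by have := Meq_scaleA s (IH (rcons P y) X); rewrite !cat_rcons -exprS.
Qed.

Lemma Meq_commute_powl x y s : pw [:: x; y] ≡ pscale s (pw [:: y; x]) ->
  forall k P X,
  pw (P ++ nseq k x ++ y :: X) ≡ pscale (s ^+ k) (pw (P ++ y :: nseq k x ++ X)).
Proof.
move=> hxy; elim=> [|k IH] P X.
  by apply: Meq_coef => w; rewrite coef_pscale expr0 mul1r.
have := IH (rcons P x) X; rewrite !cat_rcons => /Meq_trans; apply.
by rewrite exprSr; apply: Meq_scaleA; exact: (Meq_sandwich P (nseq k x ++ X) hxy).
Qed.

Lemma Meq_x22_pbw a b P X :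
  pw (P ++ x22 :: nseq a x12 ++ nseq b x21 ++ X) ≡
  pscale (r ^+ a) (pw (P ++ nseq a x12 ++ nseq b x21 ++ x22 :: X)).
Proof.
apply: Meq_trans (Meq_commute_powr swap_x22_x12 a P (nseq b x21 ++ X)) _.
have := Meq_scaleA (r ^+ a) (Meq_commute_powr swap_x22_x21 b (P ++ nseq a x12) X).
by rewrite -!catA expr1n mulr1.
Qed.

Lemma Meq_x11_x22pow c P X :
  pw (P ++ x11 :: nseq c.+1 x22 ++ X) ≡
  pw (P ++ nseq c.+1 x22 ++ x11 :: X) ++
    pscale (1 - r ^+ c.+1) (pw (P ++ [:: x12, x21 & nseq c x22 ++ X])).
Proof.
elim: c P => [|c IH] P; first by rewrite expr1; exact: (Meq_sandwich P X swap_x11_x22).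
apply: Meq_trans (Meq_sandwich P (nseq c.+1 x22 ++ X) swap_x11_x22) _.
have e1 := IH (rcons P x22); rewrite !cat_rcons in e1.
have e2 := Meq_x22_pbw 1 1 P (nseq c x22 ++ X).
apply: Meq_trans (Meq_cat e1 (Meq_refl _ _)) _.
apply: Meq_trans (Meq_cat (Meq_cat (Meq_refl _ _) (Meq_scale _ e2)) (Meq_refl _ _)) _.
apply: Meq_coef => w; rewrite [r ^+ c.+2]exprS expr1.
rewrite !(coef_cat, coef_pscale, coef_pword, coef_fpoly_cons, coef_nil) /=.
ring.
Qed.

Definition pbw_poly (N : seq (C * expo)) : fpoly C := [seq (t.1, pbw_word t.2) | t <- N].

Lemma Meq_pbw_poly1 c m p : p ≡ pscale c (pw (pbw_word m)) -> p ≡ pbw_poly [:: (c, m)].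
Proof.
move=> e; apply: Meq_trans e _.
by apply: Meq_coef => w; rewrite !coef_fpoly_cons /= mulr1.
Qed.

Lemma nseq_cons_cat (x : 'I_4) k s : nseq k x ++ x :: s = x :: nseq k x ++ s.
Proof. by elim: k => //= k ->. Qed.

Lemma Meq_x11_pbw a b c e : exists N, pw (x11 :: pbw_word (a, b, c, e)) ≡ pbw_poly N.
Proof.
have past_x12 :=
  Meq_commute_powr swap_x11_x12 a [::] (nseq b x21 ++ nseq c x22 ++ nseq e x11).
have past_x21 := Meq_scaleA 1
  (Meq_commute_powr swap_x11_x21 b (nseq a x12) (nseq c x22 ++ nseq e x11)).
rewrite expr1n in past_x12; rewrite mul1r in past_x21.
have {past_x12 past_x21} past_x12_x21 := Meq_trans past_x12 past_x21.
case: c past_x12_x21 => [|c] past_x12_x21.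
  by exists [:: (q ^- 2 ^+ b, (a, b, 0%N, e.+1))]; apply: Meq_pbw_poly1.
have past_x22 := Meq_x11_x22pow c (nseq a x12 ++ nseq b x21) (nseq e x11).
rewrite -!catA in past_x22.
have x21_past_x12 :=
  Meq_commute_powl swap_x21_x12 b (nseq a x12) (x21 :: nseq c x22 ++ nseq e x11).
exists [:: (q ^- 2 ^+ b, (a, b, c.+1, e.+1));
          (q ^- 2 ^+ b * ((1 - r ^+ c.+1) * r ^+ b), (a.+1, b.+1, c, e))].
apply: Meq_trans past_x12_x21 _.
apply: Meq_trans (Meq_scale _ past_x22) _.
apply: Meq_trans
  (Meq_scale _ (Meq_cat (Meq_refl _ _) (Meq_scale (1 - r ^+ c.+1) x21_past_x12))) _.
apply: Meq_coef => w.
rewrite !(coef_cat, coef_pscale, coef_pword, coef_fpoly_cons, coef_nil) /= !nseq_cons_cat.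
ring.
Qed.

Lemma Meq_cons_pbw k m : exists N, pw (k :: pbw_word m) ≡ pbw_poly N.
Proof.
case: m => [[[a b] c] e].
case: k => [[|[|[|[|//]]]] hk]; set k := Ordinal hk.
- have -> : k = x11 by apply: val_inj.
  exact: Meq_x11_pbw.
- exists [:: (1, (a.+1, b, c, e))]; have -> : k = x12 by apply: val_inj.
  by apply: Meq_pbw_poly1; apply: Meq_coef => w; rewrite coef_pscale mul1r.
- exists [:: (r ^+ a, (a, b.+1, c, e))]; have -> : k = x21 by apply: val_inj.
  apply: Meq_pbw_poly1.
  exact: (Meq_commute_powr swap_x21_x12 a [::] (nseq b x21 ++ nseq c x22 ++ nseq e x11)).
- exists [:: (r ^+ a, (a, b, c.+1, e))]; have -> : k = x22 by apply: val_inj.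
  apply: Meq_pbw_poly1.
  exact: (Meq_x22_pbw a b [::] (nseq c x22 ++ nseq e x11)).
Qed.

Lemma Meq_pbw_span p :
  (forall t, t \in p -> exists N, pw t.2 ≡ pbw_poly N) -> exists N, p ≡ pbw_poly N.
Proof.
elim: p => [|t p IH] hp; first by exists [::]; exact: Meq_refl.
have [N1 e1] := hp t (mem_head _ _).
have [N2 e2] : exists N, p ≡ pbw_poly N.
  by apply: IH => t' tp; apply: hp; rewrite inE tp orbT.
exists ([seq (t.1 * s.1, s.2) | s <- N1] ++ N2).
have -> : pbw_poly ([seq (t.1 * s.1, s.2) | s <- N1] ++ N2) =
          pscale t.1 (pbw_poly N1) ++ pbw_poly N2.
  by rewrite /pbw_poly /pscale map_cat -!map_comp.
apply: Meq_trans (Meq_cat (Meq_scale t.1 e1) e2).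
apply: Meq_coef => w; rewrite !(coef_fpoly_cons, coef_cat, coef_pscale, coef_nil) /=; ring.
Qed.

Lemma Meq_word_pbw u : exists N, pw u ≡ pbw_poly N.
Proof.
elim: u => [|k u [N e]]; first by exists [:: (1, (0, 0, 0, 0)%N)]; exact: Meq_refl.
have /Meq_pbw_span[N' e'] : forall t, t \in sandwich [:: k] [::] (pbw_poly N) ->
    exists N, pw t.2 ≡ pbw_poly N.
  by move=> t /mapP[s /mapP[m _ ->] ->]; rewrite /= cats0; exact: Meq_cons_pbw.
exists N'; apply: Meq_trans e'; apply: Meq_trans (Meq_sandwich [:: k] [::] e).
by apply: Meq_coef => w; rewrite /= cats0.
Qed.

Lemma Meq_pbw p : exists N, p ≡ pbw_poly N.
Proof. by apply: Meq_pbw_span => t _; exact: Meq_word_pbw. Qed.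

End Straightening.

Section Representation.
Variables (C : numClosedFieldType) (V : lmodType C) (rho : 'I_4 -> {linear V -> V}).
Implicit Types (p r : fpoly C) (u w : word) (v : V).

Definition wact w v : V := foldr (fun k => rho k) v w.

Lemma wact_cat u w v : wact (u ++ w) v = wact u (wact w v).
Proof. by rewrite /wact foldr_cat. Qed.

Lemma wact_is_linear w : linear (wact w).
Proof. by elim: w => [|k w IH] c v1 v2 //=; rewrite -linearP -IH. Qed.

HB.instance Definition _ w :=
  GRing.isLinear.Build C V V *:%R (wact w) (wact_is_linear w).

Definition pact p v : V := \sum_(t <- p) t.1 *: wact t.2 v.

Lemma pact_is_linear p : linear (pact p).
Proof.
move=> c v1 v2; rewrite /pact scaler_sumr -big_split; apply: eq_bigr => t _.
by rewrite linearP scalerDr !scalerA mulrC.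
Qed.

HB.instance Definition _ p :=
  GRing.isLinear.Build C V V *:%R (pact p) (pact_is_linear p).

Lemma pact_cat p r v : pact (p ++ r) v = pact p v + pact r v.
Proof. by rewrite /pact big_cat. Qed.

Lemma pact_pscale c p v : pact (pscale c p) v = c *: pact p v.
Proof. by rewrite /pact big_map scaler_sumr; apply: eq_bigr => t _; rewrite scalerA. Qed.

Lemma pact_pword u v : pact (pword C u) v = wact u v.
Proof. by rewrite /pact big_seq1 scale1r. Qed.

Lemma pact_flatten (l : seq (fpoly C)) v : pact (flatten l) v = \sum_(p <- l) pact p v.
Proof.
elim: l => [|p l IH]; first by rewrite /pact !big_nil.
by rewrite big_cons /= pact_cat IH.
Qed.

Lemma pact_pmul p r v : pact (pmul p r) v = pact p (pact r v).
Proof.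
rewrite /pact /pmul big_allpairs_dep; apply: eq_bigr => a _.
rewrite linear_sum scaler_sumr; apply: eq_bigr => b _.
by rewrite wact_cat linearZ scalerA.
Qed.

Lemma pact_coef_sum p (s : seq word) v : uniq s -> {subset [seq t.2 | t <- p] <= s} ->
  pact p v = \sum_(w <- s) coef p w *: wact w v.
Proof.
move=> s_uniq p_s; under eq_bigr do rewrite /coef big_mkcond /= scaler_suml.
rewrite exchange_big /pact; apply: eq_big_seq => t tp /=.
rewrite (bigD1_seq t.2) ?p_s ?map_f //= eqxx big1 ?addr0 // => w.
by rewrite eq_sym => /negbTE ->; rewrite scale0r.
Qed.

Lemma eq_pact p r v : (forall w, coef p w = coef r w) -> pact p v = pact r v.
Proof.
move=> e; pose s := undup [seq t.2 | t <- p ++ r].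
have s_uniq : uniq s := undup_uniq _.
have sub_s (p' : fpoly C) : {subset p' <= p ++ r} -> {subset [seq t.2 | t <- p'] <= s}.
  by move=> sub w /mapP[t /sub tpr ->]; rewrite mem_undup map_f.
have ps : {subset [seq t.2 | t <- p] <= s} by apply: sub_s => t tp; rewrite mem_cat tp.
have rs : {subset [seq t.2 | t <- r] <= s} by apply: sub_s => t tr; rewrite mem_cat tr orbT.
rewrite (pact_coef_sum _ s_uniq ps) (pact_coef_sum _ s_uniq rs).
by apply: eq_bigr => w _; rewrite e.
Qed.

Lemma pact_mact m n (A : 'M[C]_(m, n)) (f : 'I_n -> fpoly C) a v :
  pact (mact A f a) v = \sum_k A a k *: pact (f k) v.
Proof.
rewrite pact_flatten big_map big_enum.
by apply: eq_bigr => k _; rewrite pact_pscale.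
Qed.

Lemma pact_xact n k (f : 'I_n -> fpoly C) a v : pact (xact k f a) v = rho k (pact (f a) v).
Proof. by rewrite pact_pmul pact_pword. Qed.

Lemma pact_vadd n (f g : 'I_n -> fpoly C) a v :
  pact (vadd f g a) v = pact (f a) v + pact (g a) v.
Proof. exact: pact_cat. Qed.

Lemma pact_vsub n (f g : 'I_n -> fpoly C) a v :
  pact (vsub f g a) v = pact (f a) v - pact (g a) v.
Proof. by rewrite pact_cat pact_pscale scaleN1r. Qed.

Variable q : C.
Hypothesis rho_relI : forall k v, pact (relI q k) v = 0.

Lemma pact_ideal_elt s v : pact (ideal_elt q s) v = 0.
Proof.
rewrite pact_flatten big_map big1 // => t _.
by rewrite pact_pscale !pact_pmul rho_relI linear0 scaler0.
Qed.

Lemma pact_Meq p r v : Meq q p r -> pact p v = pact r v.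
Proof.
move=> /MeqP[s h]; rewrite (@eq_pact p (r ++ ideal_elt q s)) => [|w]; last by rewrite coef_cat.
by rewrite pact_cat pact_ideal_elt addr0.
Qed.

Lemma pact_inIdeal p v : inIdeal q p -> pact p v = 0.
Proof. by move/inIdeal_Meq0/pact_Meq ->; rewrite /pact big_nil. Qed.

End Representation.

Section RegularRepresentation.
Variables (C : numClosedFieldType) (q : C).
Hypothesis q_neq0 : q != 0.
Local Notation r := (q ^+ 2).

Definition wshift (F : expo -> seq (C * expo)) (h : expo -> C^o) : expo -> C^o :=
  fun m => \sum_(t <- F m) t.1 * h t.2.

Lemma wshift_is_linear F : linear (wshift F).
Proof.
move=> c h1 h2; apply/funext => m; rewrite /wshift !fctE /= scaler_sumr -big_split.
by apply: eq_bigr => t _; rewrite mulrDr; congr (_ + _); exact: mulrCA.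
Qed.

HB.instance Definition _ F :=
  GRing.isLinear.Build C (expo -> C^o) (expo -> C^o) *:%R (wshift F) (wshift_is_linear F).

(* regF k m lists the pairs (c, m') such that the monomial m occurs with
   coefficient c in the straightened product x_k * m'. *)
Definition regF (k : 'I_4) (m : expo) : seq (C * expo) :=
  let: (a, b, c, e) := m in
  match val k with
  | 0 => (if e is e'.+1 then [:: (q ^- 2 ^+ b, (a, b, c, e'))] else [::]) ++
         (if (a, b) is (a'.+1, b'.+1) then [:: (1 - r ^+ c.+1, (a', b', c.+1, e))] else [::])
  | 1 => if a is a'.+1 then [:: (1, (a', b, c, e))] else [::]
  | 2 => if b is b'.+1 then [:: (r ^+ a, (a, b', c, e))] else [::]
  | _ => if c is c'.+1 then [:: (r ^+ a, (a, b, c', e))] else [::]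
  end.

Definition rho_reg (k : 'I_4) : {linear (expo -> C^o) -> (expo -> C^o)} := wshift (regF k).

Lemma pact_regE p h m : pact rho_reg p h m = \sum_(t <- p) t.1 * wact rho_reg t.2 h m.
Proof. by rewrite /pact fct_sumE. Qed.

Lemma rho_reg_relI k h : pact rho_reg (relI q k) h = 0.
Proof.
apply/funext => -[[[a b] c] e]; rewrite pact_regE -[RHS]/(0 : C).
case: k => [[|[|[|[|[|[|//]]]]]] hk]; rewrite /relI /= !big_cons big_nil /=.
all: rewrite /wshift /=.
all: case: a => [|[|a]]; case: b => [|[|b]]; case: c => [|c]; case: e => [|e].
all: rewrite /= ?big_cons ?big_nil /= ?exprS ?expr0.
all: try field.
all: rewrite ?mulf_neq0 //.
Qed.

Definition delta (m0 : expo) : expo -> C^o := fun m => (m == m0)%:R.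

(* The %N matters: in ring_scope a bare 0 : nat is GRing.zero, on which == does
   not compute. *)
Local Notation delta0 := (delta (0, 0, 0, 0)%N).

Local Ltac eval_delta :=
  rewrite /= /wshift /delta /= ?big_cons ?big_nil /= ?xpair_eqE ?eqE /= ?andbF ?andFb /=
    ?mulr0n ?mulr1n ?expr0 ?mulr1 ?mulr0 ?addr0 ?add0r ?mul1r.

Lemma rho_reg_x11_delta e : rho_reg x11 (delta (0, 0, 0, e)%N) = delta (0, 0, 0, e.+1)%N.
Proof.
apply/funext => -[[[a b] c] [|e']]; case: a b c => [|a] [|b] [|c];
  by eval_delta.
Qed.

Lemma rho_reg_x22_delta c e : rho_reg x22 (delta (0, 0, c, e)%N) = delta (0, 0, c.+1, e)%N.
Proof.
apply/funext => -[[[a b] [|c']] e']; case: a b => [|a] [|b];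
  by eval_delta.
Qed.

Lemma rho_reg_x21_delta b c e : rho_reg x21 (delta (0, b, c, e)%N) = delta (0, b.+1, c, e)%N.
Proof.
apply/funext => -[[[a [|b']] c'] e']; case: a => [|a];
  by eval_delta.
Qed.

Lemma rho_reg_x12_delta a b c e : rho_reg x12 (delta (a, b, c, e)) = delta (a.+1, b, c, e).
Proof.
apply/funext => -[[[[|a'] b'] c'] e'];
  by eval_delta.
Qed.

Lemma wact_pbw_word m : wact rho_reg (pbw_word m) delta0 = delta m.
Proof.
case: m => [[[a b] c] e]; rewrite /pbw_word !wact_cat.
have -> : wact rho_reg (nseq e x11) delta0 = delta (0, 0, 0, e)%N.
  by elim: e => //= e ->; rewrite rho_reg_x11_delta.
have -> : wact rho_reg (nseq c x22) (delta (0, 0, 0, e)%N) = delta (0, 0, c, e)%N.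
  by elim: c => //= c ->; rewrite rho_reg_x22_delta.
have -> : wact rho_reg (nseq b x21) (delta (0, 0, c, e)%N) = delta (0, b, c, e)%N.
  by elim: b => //= b ->; rewrite rho_reg_x21_delta.
by elim: a => //= a ->; rewrite rho_reg_x12_delta.
Qed.

Lemma pact_pbw_poly N m :
  pact rho_reg (pbw_poly N) delta0 m = \sum_(t <- N | t.2 == m) t.1.
Proof.
rewrite pact_regE big_map [RHS]big_mkcond; apply: eq_bigr => t _.
by rewrite wact_pbw_word /delta eq_sym /=; case: eqP; rewrite ?mulr1 ?mulr0.
Qed.

Lemma regular_faithful p : pact rho_reg p delta0 = 0 -> inIdeal q p.
Proof.
move=> p0; have [N eN] := Meq_pbw q_neq0 p.
have N0 m : \sum_(t <- N | t.2 == m) t.1 = 0.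
  by rewrite -pact_pbw_poly -(pact_Meq rho_reg_relI _ eN) p0.
apply/inIdeal_Meq0; apply: Meq_trans eN _; apply: Meq_coef => w.
by rewrite coef_nil /pbw_poly (coef_map_can _ _ pbw_wordK) N0 mulr0.
Qed.

Definition x21_bounded D (h : expo -> C^o) := forall a b c e, (D < b)%N -> h (a, b, c, e) = 0.

Lemma x21_bounded_mono D D' h : x21_bounded D h -> (D <= D')%N -> x21_bounded D' h.
Proof. by move=> hD DD' a b c e lt; apply: hD; apply: leq_ltn_trans lt. Qed.

Lemma x21_bounded_delta0 : x21_bounded 0 delta0.
Proof. by move=> a [|b] c e //= _; rewrite /delta !xpair_eqE eqE /= andbF ?andFb. Qed.

Lemma x21_bounded_rho_reg k D h : x21_bounded D h -> x21_bounded D.+1 (rho_reg k h).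
Proof.
move=> hD a b c e lt; rewrite /= /wshift.
case: k => [[|[|[|[|//]]]] hk] /=.
- case: e => [|e]; case: a => [|a]; case: b lt => [|b] lt //=;
    by rewrite ?big_cons ?big_nil ?hD ?mulr0 ?addr0 // ltnW.
- by case: a => [|a]; rewrite ?big_cons ?big_nil ?hD ?mulr0 ?addr0 // ltnW.
- by case: b lt => [|b] lt; rewrite ?big_cons ?big_nil ?hD ?mulr0 ?addr0.
- by case: c => [|c]; rewrite ?big_cons ?big_nil ?hD ?mulr0 ?addr0 // ltnW.
Qed.

Lemma x21_bounded_pact p D h :
  x21_bounded D h -> x21_bounded (D + \sum_(t <- p) size t.2) (pact rho_reg p h).
Proof.
move=> hD; elim: p => [|t p IH] a b c e lt; first by rewrite pact_regE big_nil.
rewrite pact_regE big_cons -pact_regE IH ?addr0; last first.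
  by apply: leq_ltn_trans lt; rewrite big_cons leq_add2l leq_addl.
suff -> : wact rho_reg t.2 h (a, b, c, e) = 0 by rewrite mulr0.
have wb : forall w, x21_bounded (D + size w) (wact rho_reg w h).
  elim=> [|k w IHw]; first by rewrite addn0.
  by rewrite addnS; apply: x21_bounded_rho_reg.
by apply: (wb t.2); apply: leq_ltn_trans lt; rewrite big_cons leq_add2l leq_addr.
Qed.

Lemma x21_eigen_eq0 n (B : 'M[C]_n) (F : 'I_n -> expo -> C^o) D :
  (forall a, x21_bounded D (F a)) ->
  (forall a, \sum_k B a k *: F k = rho_reg x21 (F a)) -> forall a, F a = 0.
Proof.
move=> hD hB.
suff Fb : forall j a a0 b c e, (D < b + j)%N -> F a (a0, b, c, e) = 0.
  move=> a; apply/funext => -[[[a0 b] c] e]; apply: (Fb D.+1).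
  by rewrite addnS ltnS leq_addl.
elim=> [|j IH] a a0 b c e lt; first by apply: hD; rewrite addn0 in lt.
have := congr1 (fun h => h (a0, b.+1, c, e)) (hB a).
have sum0 : \sum_k (B a k *: F k) (a0, b.+1, c, e) = 0.
  by apply: big1 => k _; rewrite scalrfctE /= IH ?scaler0 // addSnnS.
rewrite fct_sumE sum0 /= /wshift /= big_cons big_nil addr0 => /esym /eqP.
by rewrite mulf_eq0 !expf_eq0 /= (negbTE q_neq0) andbF => /eqP.
Qed.

Lemma alphaI_x21_injective n (B1 : 'M[C]_n) (f : 'I_n -> fpoly C) :
  (forall a, inIdeal q (vsub (mact B1 f) (xact x21 f) a)) -> forall a, inIdeal q (f a).
Proof.
move=> H a; apply: regular_faithful; move: a.
pose F a := pact rho_reg (f a) delta0.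
apply: (@x21_eigen_eq0 n B1 F (\sum_a \sum_(t <- f a) size t.2)) => a.
  apply: x21_bounded_mono (@x21_bounded_pact (f a) _ _ x21_bounded_delta0) _.
  by rewrite add0n (bigD1 a) //= leq_addr.
have := pact_inIdeal rho_reg_relI delta0 (H a).
by rewrite pact_vsub pact_mact pact_xact => /eqP; rewrite subr_eq0 => /eqP.
Qed.

End RegularRepresentation.

Section CommonEigenvector.
Variables (C : numClosedFieldType) (n d : nat).
Variables (B1 B2 : 'M[C]_n) (i : 'M[C]_(n, d)) (j : 'M[C]_(d, n)).
Hypothesis hcomm : B1 *m B2 - B2 *m B1 + i *m j = 0.

Lemma kermx_tr_stable (S B : 'M[C]_n) :
  (S *m B^T <= S)%MS -> (kermx S^T *m B <= kermx S^T)%MS.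
Proof.
move=> /submxP[D SB]; apply/sub_kermxP.
by rewrite -mulmxA -[B *m S^T]trmxK trmx_mul trmxK SB trmx_mul mulmxA mulmx_ker mul0mx.
Qed.

Lemma common_eigenvector_of_unstable (S : 'M[C]_n) :
  (S *m B1^T <= S)%MS -> (S *m B2^T <= S)%MS -> (i^T <= S)%MS -> (\rank S < n)%N ->
  exists phi : 'rV[C]_n, exists b1 b2,
    [/\ phi != 0, phi *m B1 = b1 *: phi, phi *m B2 = b2 *: phi & phi *m i = 0].
Proof.
move=> sB1 sB2 /submxP[D iS] rkS.
pose K := row_base (kermx S^T).
have KB B : (S *m B^T <= S)%MS -> (K *m B <= K)%MS.
  move=> sB; rewrite eq_row_base; apply: submx_trans (kermx_tr_stable sB).
  by apply: submxMr; rewrite eq_row_base.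
have KS : K *m S^T = 0 by apply/sub_kermxP; rewrite eq_row_base.
have Ki : K *m i = 0 by rewrite -[i]trmxK iS trmx_mul mulmxA KS mul0mx.
have KB1B2 : K *m B1 *m B2 = K *m B2 *m B1.
  have B12 : B1 *m B2 = B2 *m B1 - i *m j.
    by move/eqP: hcomm; rewrite addr_eq0 subr_eq addrC => /eqP.
  by rewrite -!(mulmxA K) B12 mulmxBr (mulmxA K i) Ki mul0mx subr0.
pose A1 := K *m B1 *m pinvmx K; pose A2 := K *m B2 *m pinvmx K.
have A1K : A1 *m K = K *m B1 by rewrite mulmxKpV ?KB.
have A2K : A2 *m K = K *m B2 by rewrite mulmxKpV ?KB.
have A12 : A1 *m A2 = A2 *m A1.
  apply: (row_free_inj (row_base_free _)).
  by rewrite -(mulmxA A1) A2K mulmxA A1K -(mulmxA A2) A1K mulmxA A2K KB1B2.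
have rkK : (0 < \rank (kermx S^T))%N by rewrite mxrank_ker mxrank_tr subn_gt0.
have [v v0 /andP[/sub_rVP[b1 vb1] /sub_rVP[b2 vb2]]] := common_eigenvector2 rkK A12.
exists (v *m K), b1, b2; split.
- by rewrite mulmx_free_eq0 // row_base_free.
- by rewrite -mulmxA -A1K mulmxA vb1 scalemxAl.
- by rewrite -mulmxA -A2K mulmxA vb2 scalemxAl.
- by rewrite -mulmxA Ki mulmx0.
Qed.

End CommonEigenvector.

Section Character.
Variables (C : numClosedFieldType) (q b1 b2 : C).

Definition chi (k : 'I_4) : C := match val k with 2 => b1 | 3 => b2 | _ => 0 end.

Definition rho_chi (k : 'I_4) : {linear C^o -> C^o} := *:%R (chi k).

Lemma pact_chi p v :
  pact rho_chi p v = (\sum_(t <- p) t.1 * \prod_(k <- t.2) chi k) * v.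
Proof.
rewrite /pact mulr_suml; apply: eq_bigr => t _; rewrite -mulrA; congr (_ * _).
elim: t.2 => [|k w IH]; first by rewrite big_nil mul1r.
by rewrite big_cons -mulrA -IH.
Qed.

Lemma rho_chi_relI k v : pact rho_chi (relI q k) v = 0.
Proof.
rewrite pact_chi; case: k => [[|[|[|[|[|[|//]]]]]] hk];
  by rewrite /relI /= !big_cons !big_nil /chi /=; ring.
Qed.

End Character.

Section Stability.
Variables (C : numClosedFieldType) (q : C) (n d : nat).
Variables (B1 B2 : 'M[C]_n) (i : 'M[C]_(n, d)).

Lemma betaI_surjective_stable (j : 'M[C]_(d, n)) :
  B1 *m B2 - B2 *m B1 + i *m j = 0 ->
  (forall g, exists h, forall a, Meq q (betaI B1 B2 i h a) (g a)) -> stable B1 B2 i.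
Proof.
move=> hcomm surj [S [sB1 sB2 si rkS]].
have [phi [c1 [c2 [phi0 phiB1 phiB2 phii]]]] :=
  common_eigenvector_of_unstable hcomm sB1 sB2 si rkS.
have [a0 phia0] : exists a0, phi 0 a0 != 0.
  apply/existsP; apply: contraNT phi0 => /existsPn phi_0.
  by apply/eqP/rowP => a; rewrite mxE; apply/eqP/negbNE/phi_0.
have [h Hh] := surj (fun a => if a == a0 then pword C [::] else [::]).
pose X p := pact (rho_chi c1 c2) p (1 : C^o).
pose Y m (f : 'I_m -> fpoly C) := \col_k X (f k).
have X_betaI : \col_a X (betaI B1 B2 i h a) =
    c2 *: Y _ h.1.1 - B2 *m Y _ h.1.1 + (B1 *m Y _ h.1.2 - c1 *: Y _ h.1.2) + i *m Y _ h.2.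
  apply/colP => a; rewrite /Y !mxE /X !pact_vadd !pact_vsub !pact_mact !pact_xact.
  by congr (_ - _ + (_ - _) + _); apply: eq_bigr => k _; rewrite mxE.
have Xg : \col_a X (betaI B1 B2 i h a) = delta_mx a0 0.
  apply/colP => a; rewrite !mxE /X (pact_Meq (@rho_chi_relI _ q c1 c2) _ (Hh a)).
  by rewrite eqxx andbT; case: eqP => _; rewrite ?pact_pword ?mulr1n ?mulr0n // /pact big_nil.
have : col a0 phi = 0.
  rewrite colE -Xg X_betaI !(mulmxDr, mulmxN) -!scalemxAr !mulmxA phiB1 phiB2 phii.
  by rewrite -!scalemxAl !subrr mul0mx !addr0.
by move/matrixP/(_ 0 0); rewrite !mxE => /eqP; rewrite (negbTE phia0).
Qed.
End Stability.

Lemma mx_chain_stationary (F : fieldType) n (S : nat -> 'M[F]_n) :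
  (forall k, (S k <= S k.+1)%MS) -> exists k, (S k.+1 <= S k)%MS.
Proof.
move=> incr.
have [/existsP[k Sk]|/existsPn noS] := boolP [exists k : 'I_n.+1, (S k.+1 <= S k)%MS].
  by exists k.
have rkS k : (k <= n.+1)%N -> (k <= \rank (S k))%N.
  elim: k => // k IH lt; apply: leq_ltn_trans (IH (ltnW lt)) (rank_ltmx _).
  by rewrite ltmxE incr (noS (Ordinal lt)).
by have := rkS n.+1 (leqnn _); rewrite leqNgt ltnS rank_leq_col.
Qed.

Section Surjectivity.
Variables (C : numClosedFieldType) (q : C) (n d : nat).
Variables (B1 B2 : 'M[C]_n) (i : 'M[C]_(n, d)).
Local Notation "p ≡ r" := (Meq q p r) (at level 70).
Local Notation triple := (('I_n -> fpoly C) * ('I_n -> fpoly C) * ('I_d -> fpoly C))%type.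

Lemma coef_betaI (h : triple) a w : coef (betaI B1 B2 i h a) w =
  coefXl x22 (coef (h.1.1 a)) w - \sum_k B2 a k * coef (h.1.1 k) w
  + (\sum_k B1 a k * coef (h.1.2 k) w - coefXl x21 (coef (h.1.2 a)) w)
  + \sum_k i a k * coef (h.2 k) w.
Proof. by rewrite /betaI !coef_vadd !coef_vsub !coef_xact !coef_mact. Qed.

Lemma sum_coef_nil m (A : 'M[C]_(n, m)) a w : \sum_k A a k * coef ([::] : fpoly C) w = 0.
Proof. by rewrite big1 // => k _; rewrite coef_nil mulr0. Qed.

Definition in_betaI_image (g : 'I_n -> fpoly C) :=
  exists h : triple, forall a, betaI B1 B2 i h a ≡ g a.

Lemma betaI_image_coef g g' : in_betaI_image g ->
  (forall a w, coef (g a) w = coef (g' a) w) -> in_betaI_image g'.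
Proof. by move=> [h hg] e; exists h => a; apply: Meq_trans (hg a) (Meq_coef _ (e a)). Qed.

Definition lincomb m c (f1 f2 : 'I_m -> fpoly C) : 'I_m -> fpoly C :=
  fun a => pscale c (f1 a) ++ f2 a.

Lemma coef_lincomb m c (f1 f2 : 'I_m -> fpoly C) a w :
  coef (lincomb c f1 f2 a) w = c * coef (f1 a) w + coef (f2 a) w.
Proof. by rewrite coef_cat coef_pscale. Qed.

Lemma coefXl_lincomb m k c (f1 f2 : 'I_m -> fpoly C) a w :
  coefXl k (coef (lincomb c f1 f2 a)) w =
  c * coefXl k (coef (f1 a)) w + coefXl k (coef (f2 a)) w.
Proof. by case: w => [|k' w] /=; rewrite ?mulr0 ?addr0 // coef_lincomb mulrDr mulrCA. Qed.

Lemma sum_coef_lincomb m (A : 'M[C]_(n, m)) c (f1 f2 : 'I_m -> fpoly C) a w :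
  \sum_k A a k * coef (lincomb c f1 f2 k) w =
  c * \sum_k A a k * coef (f1 k) w + \sum_k A a k * coef (f2 k) w.
Proof.
rewrite mulr_sumr -big_split; apply: eq_bigr => k _.
by rewrite coef_lincomb mulrDr mulrCA.
Qed.

Lemma betaI_image_lincomb c g1 g2 : in_betaI_image g1 -> in_betaI_image g2 ->
  in_betaI_image (lincomb c g1 g2).
Proof.
move=> [h1 e1] [h2 e2].
exists (lincomb c h1.1.1 h2.1.1, lincomb c h1.1.2 h2.1.2, lincomb c h1.2 h2.2) => a.
apply: Meq_trans (Meq_cat (Meq_scale c (e1 a)) (e2 a)); apply: Meq_coef => w.
rewrite coef_cat coef_pscale !coef_betaI /= !coefXl_lincomb !sum_coef_lincomb; ring.
Qed.

Lemma betaI_image_betaI h : in_betaI_image (betaI B1 B2 i h).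
Proof. by exists h => a; exact: Meq_refl. Qed.

Definition tensor (v : 'rV[C]_n) (m : fpoly C) : 'I_n -> fpoly C := fun a => pscale (v 0 a) m.

Definition reachable (v : 'rV[C]_n) := forall m, in_betaI_image (tensor v m).

Lemma reachable_lincomb c v1 v2 : reachable v1 -> reachable v2 -> reachable (c *: v1 + v2).
Proof.
move=> r1 r2 m; apply: betaI_image_coef (betaI_image_lincomb c (r1 m) (r2 m)) _ => a w.
by rewrite coef_lincomb !coef_pscale !mxE mulrDl mulrA.
Qed.

Lemma reachable0 : reachable 0.
Proof.
move=> m; exists (fun _ => [::], fun _ => [::], fun _ => [::]) => a; apply: Meq_coef => w.
by rewrite coef_betaI !sum_coef_nil !coefXl_nil coef_pscale mxE mul0r subrr !addr0.
Qed.

Lemma reachable_submx m (A : 'M[C]_(m, n)) v :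
  (forall k, reachable (row k A)) -> (v <= A)%MS -> reachable v.
Proof.
move=> rA /submxP[D ->]; rewrite mulmx_sum_row.
elim/big_ind: _ => [|v1 v2|k _]; first exact: reachable0.
  by move=> r1 r2; rewrite -[v1]scale1r; exact: reachable_lincomb.
by rewrite -[_ *: _]addr0; apply: reachable_lincomb => //; exact: reachable0.
Qed.

Lemma reachable_i k : reachable (row k i^T).
Proof.
move=> m; exists (fun _ => [::], fun _ => [::], fun b => if b == k then m else [::]) => a.
apply: Meq_coef => w; rewrite coef_betaI /= coef_pscale !mxE !coefXl_nil.
rewrite (bigD1 k) //= eqxx !big1 => [|b|b|b] //; rewrite ?coef_nil ?mulr0 //.
  by rewrite subrr !add0r addr0.
by move/negbTE ->; rewrite coef_nil mulr0.
Qed.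

Lemma reachable_B1 v : reachable v -> reachable (v *m B1^T).
Proof.
move=> rv m; have hv := betaI_image_betaI (fun _ => [::], tensor v m, fun _ => [::]).
apply: betaI_image_coef (betaI_image_lincomb 1 hv (rv (pmul (pX C x21) m))) _ => a w.
rewrite coef_lincomb coef_betaI /= !coef_pscale coef_pmulX coefXl_pscale coefXl_nil.
rewrite !sum_coef_nil mxE mulr_suml.
under eq_bigr do rewrite coef_pscale mulrA [B1 _ _ * _]mulrC.
by under [in RHS]eq_bigr do rewrite mxE; ring.
Qed.

Lemma reachable_B2 v : reachable v -> reachable (v *m B2^T).
Proof.
move=> rv m; have hv := betaI_image_betaI (tensor v m, fun _ => [::], fun _ => [::]).
apply: betaI_image_coef (betaI_image_lincomb (-1) hv (rv (pmul (pX C x22) m))) _ => a w.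
rewrite coef_lincomb coef_betaI /= !coef_pscale coef_pmulX coefXl_pscale coefXl_nil.
rewrite !sum_coef_nil mxE mulr_suml.
under eq_bigr do rewrite coef_pscale mulrA [B2 _ _ * _]mulrC.
by under [in RHS]eq_bigr do rewrite mxE; ring.
Qed.

Definition krylov k : 'M[C]_n :=
  iter k (fun S => (S + (S *m B1^T + S *m B2^T))%MS) <<i^T>>%MS.

Lemma reachable_krylov k v : (v <= krylov k)%MS -> reachable v.
Proof.
elim: k v => [|k IH] v; first by rewrite genmxE; apply: reachable_submx reachable_i.
move=> /sub_addsmxP[[u1 u2] ->] /=; rewrite -[_ *m krylov k]scale1r.
apply: reachable_lincomb; first by apply: IH; exact: submxMl.
move: (submxMl u2 (krylov k *m B1^T + krylov k *m B2^T)%MS).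
move=> /sub_addsmxP[[w1 w2] ->] /=; rewrite !mulmxA -[w1 *m _ *m _]scale1r.
apply: reachable_lincomb; [apply: reachable_B1 | apply: reachable_B2];
  by apply: IH; exact: submxMl.
Qed.

Lemma krylov_i k : (i^T <= krylov k)%MS.
Proof.
elim: k => [|k IH]; first by rewrite genmxE.
exact: submx_trans IH (addsmxSl _ _).
Qed.

Lemma stable_betaI_surjective : stable B1 B2 i -> forall g, in_betaI_image g.
Proof.
move=> st g.
have [k kS] := mx_chain_stationary (fun k => addsmxSl (krylov k) _).
have full : row_full (krylov k).
  rewrite /row_full eqn_leq rank_leq_col leqNgt; apply/negP => lt; apply: st.
  exists (krylov k); split; [| |exact: krylov_i|exact: lt];
    apply: submx_trans kS; apply: submx_trans (addsmxSr _ _).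
  - exact: addsmxSl.
  - exact: addsmxSr.
have img l :
    in_betaI_image (fun a => flatten [seq pscale ((1%:M : 'M[C]_n) a b) (g b) | b <- l]).
  elim: l => [|b l IH].
    by apply: betaI_image_coef (reachable0 [::]) _ => a w; rewrite coef_pscale !coef_nil mulr0.
  have e_b := reachable_krylov (submx_full (row b 1%:M) full) (g b).
  apply: betaI_image_coef (betaI_image_lincomb 1 e_b IH) _ => a w.
  by rewrite coef_lincomb coef_cat !coef_pscale !mxE mul1r eq_sym.
apply: betaI_image_coef (img (enum 'I_n)) _ => a w.
move: (coef_mact 1%:M g a w); rewrite /mact => ->.
rewrite (bigD1 a) //= big1 => [|b nb]; first by rewrite mxE eqxx mul1r addr0.
by rewrite mxE eq_sym (negbTE nb) mul0r.
Qed.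

End Surjectivity.

Unset Implicit Arguments.

Theorem proposition3p9 (C : numClosedFieldType) (q : C) (hq : 0 < q)
  (n d : nat) (B1 B2 : 'M[C]_n) (i : 'M[C]_(n, d)) (j : 'M[C]_(d, n))
  (hcomm : B1 *m B2 - B2 *m B1 + i *m j = 0)
  (hmom : B1 *m dag B1 - dag B1 *m B1 + (B2 *m dag B2 - dag B2 *m B2)
          + i *m dag i - dag j *m j = 0) :
  (forall f : 'I_n -> fpoly C,
      (forall a, inIdeal q ((alphaI B1 B2 j f).1.1 a)) ->
      (forall a, inIdeal q ((alphaI B1 B2 j f).1.2 a)) ->
      (forall b, inIdeal q ((alphaI B1 B2 j f).2 b)) ->
      forall a, inIdeal q (f a))
  /\
  ((forall g : 'I_n -> fpoly C,
      exists h : ('I_n -> fpoly C) * ('I_n -> fpoly C) * ('I_d -> fpoly C),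
        forall a, Meq q (betaI B1 B2 i h a) (g a))
   <-> stable B1 B2 i).
Proof.
have q_neq0 : q != 0 := lt0r_neq0 hq.
split; first by move=> f alpha1_0 _ _; exact: (alphaI_x21_injective q_neq0 alpha1_0).
split; first exact: betaI_surjective_stable hcomm.
exact: stable_betaI_surjective.
Qed.
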